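(* Let $\mathsf{A}$ and $\mathsf{B}$ be density matrices on the same finite-dimensional complex Hilbert space with $\operatorname{rank}(\mathsf{A}) = \operatorname{rank}(\mathsf{B})$, and let $k \in [0,1]$. Then $$\mathsf{A} \sqsubseteq_k \mathsf{B} \iff \neg_{supp}\mathsf{B} \sqsubseteq_k \neg_{supp}\mathsf{A}.$$
   Context: A density matrix is a positive semidefinite Hermitian matrix of trace $1$. A Hermitian matrix $M$ is called positive, written $M \geq 0$, if it is positive semidefinite. For Hermitian matrices $\mathsf{X}, \mathsf{Y}$ and a real number $k \in [0,1]$, $k$-hyponymy is defined by $\mathsf{X} \sqsubseteq_k \mathsf{Y}$ iff $\mathsf{Y} - k\mathsf{X} \geq 0$. The support inverse of a positive semidefinite matrix $\mathsf{X}$ with spectral decomposition $\mathsf{X} = \sum_i \lambda_i |i\rangle\langle i|$ (orthonormal eigenbasis $\{|i\rangle\}$) is $\neg_{supp}\mathsf{X} = \sum_{i:\lambda_i \neq 0} \lambda_i^{-1} |i\rangle\langle i|$, i.e. the Moore–Penrose pseudoinverse of $\mathsf{X}$; it has the same eigenbasis as $\mathsf{X}$, inverts the nonzero eigenvalues, and is zero on the kernel of $\mathsf{X}$. *)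

(* finite-dimensional Hilbert space = C^n with C a
   numClosedFieldType (e.g. algC, or complex numbers). *)
From HB Require Import structures.
From mathcomp Require Import all_boot all_order all_algebra.
From mathcomp Require Import sesquilinear spectral.
Set Implicit Arguments.
Unset Strict Implicit.
Unset Printing Implicit Defensive.
Import Order.TTheory GRing.Theory Num.Theory.
Local Open Scope ring_scope.

Section Defs.
Variable C : numClosedFieldType.

Definition psdmx n (M : 'M[C]_n) : Prop :=
  M \is hermsymmx /\
  forall v : 'rV[C]_n, 0 <= (v *m M *m (map_mx Num.conj v)^T) 0 0.

Definition density n (M : 'M[C]_n) : Prop := psdmx M /\ \tr M = 1.

Definition hyponym n (k : C) (X Y : 'M[C]_n) : Prop := psdmx (Y - k *: X).

Definition supp_inv n (M : 'M[C]_n) : 'M[C]_n :=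
  invmx (spectralmx M)
  *m diag_mx (map_mx (fun x : C => if x == 0 then 0 else x^-1) (spectral_diag M))
  *m spectralmx M.
End Defs.

(* If 0 <= X <= Y then ker Y is contained in ker X, so equal ranks force
   ker X = ker Y.  The support inverses X+ and Y+ are Hermitian group
   inverses, and equal kernels give X X+ Y+ = Y+ = Y+ X X+.  Hence
     X+ - Y+ = (X+ - Y+) X (X+ - Y+) + Y+ (Y - X) Y+
   is a sum of congruences of positive matrices, i.e. Y+ <= X+.  For k > 0
   this is applied to X = kA, Y = B, and for the converse to X = kB+, Y = A+,
   whose group inverses are k^-1 B and A. *)
From HB Require Import structures.
From mathcomp Require Import all_boot all_order all_algebra.
From mathcomp Require Import sesquilinear spectral.
From mathcomp Require Import ring.
Set Implicit Arguments.
Unset Strict Implicit.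
Unset Printing Implicit Defensive.
Import Order.TTheory GRing.Theory Num.Theory.
Local Open Scope ring_scope.
Local Open Scope sesquilinear_scope.

Section PositiveMatrices.
Variable C : numClosedFieldType.

Lemma trmxC_mul m n p (A : 'M[C]_(m, n)) (B : 'M[C]_(n, p)) :
  (A *m B)^t* = B^t* *m A^t*.
Proof. by rewrite trmx_mul map_mxM. Qed.

Lemma trmxCD m n (A B : 'M[C]_(m, n)) : (A + B)^t* = A^t* + B^t*.
Proof. by apply/matrixP=> i j; rewrite !mxE rmorphD. Qed.

Lemma trmxCB m n (A B : 'M[C]_(m, n)) : (A - B)^t* = A^t* - B^t*.
Proof. by apply/matrixP=> i j; rewrite !mxE rmorphB. Qed.

Lemma trmxCZ m n c (A : 'M[C]_(m, n)) : (c *: A)^t* = c^* *: A^t*.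
Proof. by apply/matrixP=> i j; rewrite !mxE rmorphM. Qed.

Definition qform n (M : 'M[C]_n) (v : 'rV[C]_n) : C := (v *m M *m v^t*) 0 0.

Lemma psdmxP n (M : 'M[C]_n) :
  psdmx M <-> M^t* = M /\ forall v, 0 <= qform M v.
Proof.
rewrite /psdmx /qform; split=> -[herm pos]; split.
- by move/is_hermitianmxP: herm; rewrite expr0 scale1r => {2}->.
- by move=> v; rewrite -map_trmx; apply: pos.
- by apply/is_hermitianmxP; rewrite expr0 scale1r herm.
- by move=> v; rewrite map_trmx; apply: pos.
Qed.

Lemma psdmx_herm n (M : 'M[C]_n) : psdmx M -> M^t* = M.
Proof. by case/psdmxP. Qed.

Lemma psdmx_qform_ge0 n (M : 'M[C]_n) : psdmx M -> forall v, 0 <= qform M v.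
Proof. by case/psdmxP. Qed.

Lemma qformD n (M N : 'M[C]_n) v : qform (M + N) v = qform M v + qform N v.
Proof. by rewrite /qform mulmxDr mulmxDl !mxE. Qed.

Lemma qformB n (M N : 'M[C]_n) v : qform (M - N) v = qform M v - qform N v.
Proof. by rewrite /qform mulmxBr mulmxBl !mxE. Qed.

Lemma qformZ n (M : 'M[C]_n) c v : qform (c *: M) v = c * qform M v.
Proof. by rewrite /qform -scalemxAr -scalemxAl mxE. Qed.

Lemma qform_congr n (H M : 'M[C]_n) v :
  H^t* = H -> qform (H *m M *m H) v = qform M (v *m H).
Proof. by move=> herm; rewrite /qform trmxC_mul herm !mulmxA. Qed.

Lemma qformDZ n (M : 'M[C]_n) v w t : M^t* = M ->
  qform M (v + t *: w) = qform M v + t^* * (v *m M *m w^t*) 0 0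
     + t * ((v *m M *m w^t*) 0 0)^* + t * t^* * qform M w.
Proof.
move=> herm.
have swap : w *m M *m v^t* = (v *m M *m w^t*)^t*.
  by rewrite !trmxC_mul trmxCK herm mulmxA.
rewrite /qform trmxCD trmxCZ !mulmxDl !mulmxDr -!scalemxAl -!scalemxAr swap.
rewrite !mxE; ring.
Qed.

Lemma psdmx_qform_eq0 n (M : 'M[C]_n) v :
  psdmx M -> qform M v = 0 -> v *m M = 0.
Proof.
move=> /psdmxP[herm pos] v0.
have orth (w : 'rV[C]_n) : (v *m M *m w^t*) 0 0 = 0.
  set a := (v *m M *m w^t*) 0 0; set c := qform M w.
  have c0 : 0 <= c := pos w.
  have c1 : 0 < c + 1 by rewrite ltr_wpDl.
  set s := (c + 1)^-1.
  have s0 : 0 < s by rewrite invr_gt0.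
  have sR : s^* = s by rewrite geC0_conj // ltW.
(* Along v - s a w the form equals s |a|^2 (s c - 2), and s c < 1. *)
  have := pos (v + (- (s * a)) *: w).
  rewrite qformDZ // v0 -/a -/c.
  have -> : 0 + (- (s * a))^* * a + - (s * a) * a^* + - (s * a) * (- (s * a))^* * c
            = s * (a * a^*) * (s * c - 2).
    by rewrite rmorphN rmorphM /= sR; ring.
  have sc2 : s * c - 2 < 0.
    rewrite subr_lt0 mulrC -/(c / (c + 1)) ltr_pdivrMr //.
    apply: (@lt_le_trans _ _ (c + 1)); first by rewrite ltrDl.
    by rewrite ler_peMl ?(ltW c1) // ler1n.
  rewrite nmulr_lge0 // pmulr_rle0 // => aa0.
  by apply/eqP; rewrite -mul_conjC_eq0 eq_le aa0 mul_conjC_ge0.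
apply/rowP=> j; have := orth (delta_mx 0 j).
have -> : (delta_mx 0 j : 'rV[C]_n)^t* = delta_mx j 0.
  apply/matrixP=> i l; rewrite !mxE.
  by case: eqP; case: eqP => /= *; rewrite ?rmorph1 ?rmorph0.
by rewrite -colE mxE => ->; rewrite mxE.
Qed.

Lemma psdmxZ n (M : 'M[C]_n) c : 0 <= c -> psdmx M -> psdmx (c *: M).
Proof.
move=> c0 /psdmxP[herm pos]; apply/psdmxP; split.
  by rewrite trmxCZ herm geC0_conj.
by move=> v; rewrite qformZ mulr_ge0.
Qed.

Lemma psdmx_kermx_sub n (X Y : 'M[C]_n) :
  psdmx X -> psdmx (Y - X) -> (kermx Y <= kermx X)%MS.
Proof.
move=> pX pYX; apply/rV_subP=> v /sub_kermxP vY; apply/sub_kermxP.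
apply: psdmx_qform_eq0 => //; apply/eqP; rewrite eq_le psdmx_qform_ge0 // andbT.
have := psdmx_qform_ge0 pYX v.
by rewrite qformB /qform vY mul0mx mxE sub0r oppr_ge0.
Qed.

Lemma psdmx_kermx_eq n (X Y : 'M[C]_n) :
  psdmx X -> psdmx (Y - X) -> \rank X = \rank Y -> (kermx X <= kermx Y)%MS.
Proof.
move=> pX pYX rXY; have sub := psdmx_kermx_sub pX pYX.
have : \rank (kermx Y) = \rank (kermx X) by rewrite !mxrank_ker rXY.
by move/eqP; rewrite (mxrank_leqif_eq sub) => /andP[].
Qed.

Definition group_inverse n (M Z : 'M[C]_n) : Prop :=
  [/\ M *m Z *m M = M, Z *m M *m Z = Z & M *m Z = Z *m M].

Lemma group_inverse_sym n (M Z : 'M[C]_n) : group_inverse M Z -> group_inverse Z M.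
Proof. by case. Qed.

Lemma mxrank_group_inverse n (M Z : 'M[C]_n) :
  group_inverse M Z -> \rank Z = \rank M.
Proof.
have le M' Z' : group_inverse M' Z' -> (\rank M' <= \rank Z')%N.
  case=> MZM _ _; rewrite -{1}MZM.
  exact: leq_trans (mxrankM_maxl _ _) (mxrankM_maxr _ _).
by move=> gMZ; apply/eqP; rewrite eqn_leq !le //; apply: group_inverse_sym.
Qed.

Lemma group_inverseZ n (M Z : 'M[C]_n) c :
  c != 0 -> group_inverse M Z -> group_inverse (c *: M) (c^-1 *: Z).
Proof.
move=> c0 [MZM ZMZ MZ]; split.
- by rewrite -!scalemxAl -!scalemxAr -!scalemxAl !scalerA MZM mulfV // mulr1.
- by rewrite -!scalemxAl -!scalemxAr -!scalemxAl !scalerA ZMZ mulVf // mulr1.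
- by rewrite -!scalemxAl -!scalemxAr !scalerA MZ mulrC.
Qed.

Lemma psdmx_group_inverse n (M Z : 'M[C]_n) :
  psdmx M -> group_inverse M Z -> Z^t* = Z -> psdmx Z.
Proof.
move=> pM [_ ZMZ _] herm; apply/psdmxP; split=> // v.
by rewrite -ZMZ qform_congr //; apply: psdmx_qform_ge0.
Qed.

Lemma psdmx_sub_group_inverse n (X Y X' Y' : 'M[C]_n) :
  psdmx X -> psdmx (Y - X) -> \rank X = \rank Y ->
  group_inverse X X' -> group_inverse Y Y' -> X'^t* = X' -> Y'^t* = Y' ->
  psdmx (X' - Y').
Proof.
move=> pX pYX rXY [XX'X X'XX' XX'] [YY'Y Y'YY' YY'] hX' hY'.
have hX := psdmx_herm pX.
have projY : (1%:M - X *m X') *m Y = 0.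
  apply/sub_kermxP; apply: submx_trans (psdmx_kermx_eq pX pYX rXY).
  by apply/sub_kermxP; rewrite mulmxBl mul1mx XX'X subrr.
have XX'Y' : X *m X' *m Y' = Y'.
  apply/eqP; rewrite eq_sym -subr_eq0 -{1}[Y']mul1mx -mulmxBl.
  by rewrite -Y'YY' -YY' !mulmxA projY !mul0mx.
have Y'XX' : Y' *m X *m X' = Y'.
  have := congr1 (fun M => M^t*) XX'Y'.
  by rewrite /= !trmxC_mul hY' hX' hX -XX' mulmxA.
have X'XY' : X' *m X *m Y' = Y' by rewrite -XX'.
apply/psdmxP; split; first by rewrite trmxCB hX' hY'.
move=> v.
have -> : X' - Y' = (X' - Y') *m X *m (X' - Y') + Y' *m (Y - X) *m Y'.
  by rewrite !mulmxBl !mulmxBr !mulmxBl X'XX' X'XY' Y'XX' Y'YY' subrK.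
by rewrite qformD !qform_congr ?trmxCB ?hX' ?hY' // addr_ge0 ?psdmx_qform_ge0.
Qed.

Lemma hyponym_group_inverse n (k : C) (X Y X' Y' : 'M[C]_n) :
  0 < k -> psdmx X -> \rank X = \rank Y ->
  group_inverse X X' -> group_inverse Y Y' -> X'^t* = X' -> Y'^t* = Y' ->
  hyponym k X Y -> hyponym k Y' X'.
Proof.
move=> k0 pX rXY gX gY hX' hY' XY.
have kn0 : k != 0 by rewrite gt_eqF.
have pkX : psdmx (k *: X) := psdmxZ (ltW k0) pX.
have hkX' : (k^-1 *: X')^t* = k^-1 *: X'.
  by rewrite trmxCZ hX' geC0_conj // invr_ge0 ltW.
have := psdmx_sub_group_inverse pkX XY _ (group_inverseZ kn0 gX) gY hkX' hY'.
rewrite mxrank_scale_nz // => /(_ rXY) /(psdmxZ (ltW k0)).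
by rewrite /hyponym scalerBr scalerA mulfV // scale1r.
Qed.

(* Since 0^-1 = 0 in mathcomp, the case split in [supp_inv] is redundant. *)
Lemma supp_invE n (M : 'M[C]_n) :
  supp_inv M = (spectralmx M)^t* *m diag_mx (map_mx GRing.inv (spectral_diag M))
               *m spectralmx M.
Proof.
rewrite /supp_inv invmx_unitary ?spectral_unitarymx //.
by congr (_ *m diag_mx _ *m _); apply/eq_map_mx => x; case: eqP => // ->; rewrite invr0.
Qed.

Lemma mul_unitary_diag n (P : 'M[C]_n) (d e : 'rV[C]_n) : P \is unitarymx ->
  (P^t* *m diag_mx d *m P) *m (P^t* *m diag_mx e *m P)
  = P^t* *m diag_mx (\row_j (d 0 j * e 0 j)) *m P.
Proof.
move=> /unitarymxP PP.
by rewrite !mulmxA -[_ *m P *m P^t*]mulmxA PP mulmx1 -[_ *m diag_mx e]mulmxA mulmx_diag.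
Qed.

Lemma group_inverse_unitary_diag n (P : 'M[C]_n) (d : 'rV[C]_n) :
  P \is unitarymx ->
  group_inverse (P^t* *m diag_mx d *m P) (P^t* *m diag_mx (map_mx GRing.inv d) *m P).
Proof.
move=> Pu; split; rewrite !mul_unitary_diag //; congr (_ *m diag_mx _ *m _);
  apply/rowP=> j; rewrite !mxE ?[_^-1 * _]mulrC //.
- by have [->|dj0] := eqVneq (d 0 j) 0; rewrite ?mulr0 ?mul0r // mulfV ?mul1r.
- by have [->|dj0] := eqVneq (d 0 j) 0; rewrite ?invr0 ?mulr0 ?mul0r // mulfV ?mul1r.
Qed.

Lemma trmxC_unitary_diag n (P : 'M[C]_n) (d : 'rV[C]_n) :
  d \is a realmx -> (P^t* *m diag_mx d *m P)^t* = P^t* *m diag_mx d *m P.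
Proof.
by move=> dR; rewrite !trmxC_mul trmxCK mulmxA tr_diag_mx map_diag_mx (realmxC dR).
Qed.

Lemma inv_realmx m n (d : 'M[C]_(m, n)) : d \is a realmx -> map_mx GRing.inv d \is a realmx.
Proof. by move=> /mxOverP dR; apply/mxOverP=> i j; rewrite mxE realV. Qed.

Lemma hermsymmx_spectral n (M : 'M[C]_n) : M \is hermsymmx ->
  M = (spectralmx M)^t* *m diag_mx (spectral_diag M) *m spectralmx M.
Proof.
move=> /hermitian_normalmx /orthomx_spectralP {1}->.
by rewrite invmx_unitary ?spectral_unitarymx.
Qed.

Lemma group_inverse_supp_inv n (M : 'M[C]_n) :
  M \is hermsymmx -> group_inverse M (supp_inv M).
Proof.
move=> /hermsymmx_spectral {1}->; rewrite supp_invE.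
exact/group_inverse_unitary_diag/spectral_unitarymx.
Qed.

Lemma trmxC_supp_inv n (M : 'M[C]_n) :
  M \is hermsymmx -> (supp_inv M)^t* = supp_inv M.
Proof.
by move=> /hermitian_spectral_diag_real dR; rewrite supp_invE trmxC_unitary_diag ?inv_realmx.
Qed.

End PositiveMatrices.

Local Close Scope sesquilinear_scope.

Theorem mainTheorem1 (C : numClosedFieldType) (n : nat) (A B : 'M[C]_n) (k : C) :
  density A -> density B -> \rank A = \rank B ->
  0 <= k <= 1 ->
  (hyponym k A B <-> hyponym k (supp_inv B) (supp_inv A)).
Proof.
move=> [pA _] [pB _] rAB /andP[k0 _].
have [hA hB] := (pA.1, pB.1).
have [gA gB] := (group_inverse_supp_inv hA, group_inverse_supp_inv hB).
have [hA' hB'] := (trmxC_supp_inv hA, trmxC_supp_inv hB).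
have [pA' pB'] := (psdmx_group_inverse pA gA hA', psdmx_group_inverse pB gB hB').
have [->|kn0] := eqVneq k 0; first by rewrite /hyponym !scale0r !subr0; split.
have kpos : 0 < k by rewrite lt_def kn0.
split; apply: hyponym_group_inverse;
  rewrite ?(mxrank_group_inverse gA) ?(mxrank_group_inverse gB) ?psdmx_herm //;
  exact: group_inverse_sym.
Qed.
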